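(* Let $R$ be a Noetherian ring and $S$ a common multiplicatively closed subset of $R$. Consider the functor $\tau_S$ on finitely generated $R$-modules, $\tau_S(M)=\{m\in M: rm=0\text{ for some }r\in S\}$. The following are equivalent: (a) $\tau_S$ is representable; (b) $\tau_S$ is finitely generated; (c) $S$ is coprincipal.
   Context: A subset $S\subseteq R$ is common multiplicatively closed if $S\neq\emptyset$ and for all $r,s\in S$ there exists $t\in S$ with $t\in Rr\cap Rs$ (then $\tau_S(M)$ is a submodule). $S$ is coprincipal if $S\ne\emptyset$ and there is $s\in S$ with $s\in\bigcap_{r\in S}Rr$. For an $R$-module $X$, $h_X=\operatorname{Hom}_R(X,-)$; an $R$-linear functor $F$ from finitely generated modules to themselves is representable if $F\cong h_M$ for some finitely generated $M$, and finitely generated if there is a finitely generated $M$ with a surjective natural transformation $h_M\to F$. *)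

From HB Require Import structures.
From mathcomp Require Import all_boot all_order all_algebra.
Set Implicit Arguments. Unset Strict Implicit. Unset Printing Implicit Defensive.
Import GRing.Theory.
Local Open Scope ring_scope.

Section Defs.
Variable R : nzRingType.

Definition left_ideal (I : R -> Prop) : Prop :=
  [/\ I 0, (forall x y, I x -> I y -> I (x + y)) & (forall a x, I x -> I (a * x))].

Definition noetherian_ring : Prop :=
  forall I : R -> Prop, left_ideal I ->
    exists s : seq R, forall x,
      I x <-> exists c : 'I_(size s) -> R, x = \sum_(i < size s) c i * s`_i.

Definition fin_gen (M : lmodType R) : Prop :=
  exists s : seq M, forall m : M,
    exists c : 'I_(size s) -> R, m = \sum_(i < size s) c i *: s`_i.

Definition common_mult_closed (S : R -> Prop) : Prop :=
  (exists s, S s) /\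
  forall r s, S r -> S s -> exists t, [/\ S t, exists a, t = a * r & exists b, t = b * s].

Definition coprincipal (S : R -> Prop) : Prop :=
  (exists s, S s) /\ exists s, S s /\ forall r, S r -> exists a, s = a * r.

Definition tau (S : R -> Prop) (M : lmodType R) (m : M) : Prop :=
  exists r, S r /\ r *: m = 0.

(** A natural transformation eta : h_M -> tau_S between functors on finitely
    generated R-modules, where h_M = Hom_R(M, -) (R-linear maps).
    Components eta N : Hom_R(M,N) -> tau_S(N) (given as maps into N landing in
    tau_S(N)), additive, and natural: eta N' (g o f) = tau_S(g) (eta N f). *)
Definition nat_trans_hom_tau (S : R -> Prop) (M : lmodType R)
  (eta : forall N : lmodType R, (M -> N) -> N) : Prop :=
  [/\ (forall N : lmodType R, fin_gen N ->
         forall f : M -> N, linear f -> tau S (eta N f)),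
      (forall N : lmodType R, fin_gen N ->
         forall f g : M -> N, linear f -> linear g ->
           eta N (fun x => f x + g x) = eta N f + eta N g) &
      (forall (N N' : lmodType R), fin_gen N -> fin_gen N' ->
         forall (f : M -> N) (g : N -> N'), linear f -> linear g ->
           eta N' (g \o f) = g (eta N f))].

Definition components_surjective (S : R -> Prop) (M : lmodType R)
  (eta : forall N : lmodType R, (M -> N) -> N) : Prop :=
  forall N : lmodType R, fin_gen N ->
    forall n : N, tau S n -> exists f : M -> N, linear f /\ eta N f = n.

Definition components_injective (M : lmodType R)
  (eta : forall N : lmodType R, (M -> N) -> N) : Prop :=
  forall N : lmodType R, fin_gen N ->
    forall f g : M -> N, linear f -> linear g -> eta N f = eta N g ->
      forall x, f x = g x.

Definition tau_representable (S : R -> Prop) : Prop :=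
  exists M : lmodType R, fin_gen M /\
    exists eta : forall N : lmodType R, (M -> N) -> N,
                [/\ nat_trans_hom_tau S eta,
                    components_surjective S eta & components_injective eta].

Definition tau_fin_gen (S : R -> Prop) : Prop :=
  exists M : lmodType R, fin_gen M /\
    exists eta : forall N : lmodType R, (M -> N) -> N,
      nat_trans_hom_tau S eta /\ components_surjective S eta.

End Defs.

From HB Require Import structures.
From mathcomp Require Import all_boot all_order all_algebra.
From mathcomp Require Import boolp.
Set Implicit Arguments. Unset Strict Implicit. Unset Printing Implicit Defensive.
Import GRing.Theory.
Local Open Scope ring_scope.
Local Open Scope quotient_scope.

(* If s in S lies in every Rr (r in S), then tau_S(N) = {n | s n = 0}, which
   is Hom(R/Rs, N) via f |-> f(1 + Rs); so R/Rs represents tau_S.  Conversely,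
   let eta : h_M -> tau_S be surjective and pick s in S killing eta_M(id).  For
   r in S the class of 1 in R/Rr is torsion, hence equals eta(f) = f(eta_M(id))
   for some f by naturality, so s kills it, i.e. s lies in Rr. *)

Section LeftQuotient.
Variables (R : nzRingType) (s : R).

(* The left ideal Rs, made a boolean predicate classically: the library's
   quotient [{ideal_quot I}] only needs [I] to be a zmod-closed predicate. *)
Definition left_multiples : {pred R} := fun x => `[< exists a, x = a * s >].

Lemma left_multiplesP x : reflect (exists a, x = a * s) (x \in left_multiples).
Proof. exact: asboolP. Qed.

Lemma left_multiples_zmod_closed : zmod_closed left_multiples.
Proof.
split=> [|x y /left_multiplesP[a ->] /left_multiplesP[b ->]]; apply/left_multiplesP.
  by exists 0; rewrite mul0r.
by exists (a - b); rewrite mulrBl.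
Qed.

HB.instance Definition _ :=
  GRing.isZmodClosed.Build R left_multiples left_multiples_zmod_closed.

Lemma left_multiplesMl a x : x \in left_multiples -> a * x \in left_multiples.
Proof.
by case/left_multiplesP=> b ->; apply/left_multiplesP; exists (a * b); rewrite mulrA.
Qed.

Definition lquot := {ideal_quot left_multiples}.
HB.instance Definition _ := GRing.Zmodule.on lquot.
HB.instance Definition _ := EqQuotient.on lquot.

Lemma lquot_eqE x y : (x == y %[mod lquot]) = (x - y \in left_multiples).
Proof. by rewrite -Quotient.idealrBE. Qed.

Definition lquot_scale (a : R) : lquot -> lquot := lift_op1 lquot ( *%R a).

Lemma pi_scale a : {morph \pi_lquot : x / a * x >-> lquot_scale a x}.
Proof.
move=> x; unlock lquot_scale; apply/eqP; rewrite lquot_eqE -mulrBr left_multiplesMl //.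
by rewrite -lquot_eqE reprK.
Qed.
Canonical pi_scale_morph a := PiMorph1 (pi_scale a).

Lemma lquot_scaleA a b q : lquot_scale a (lquot_scale b q) = lquot_scale (a * b) q.
Proof. by elim/quotW: q => x; rewrite !piE mulrA. Qed.

Lemma lquot_scale1 : left_id 1 lquot_scale.
Proof. by elim/quotW=> x; rewrite !piE mul1r. Qed.

Lemma lquot_scaleDr : right_distributive lquot_scale +%R.
Proof. by move=> a; elim/quotW=> x; elim/quotW=> y; rewrite -!pi_addr !piE mulrDr. Qed.

Lemma lquot_scaleDl q : {morph lquot_scale^~ q : a b / a + b}.
Proof. by elim/quotW: q => x a b; rewrite !piE mulrDl. Qed.

HB.instance Definition _ := GRing.Zmodule_isLmodule.Build R lquot
  lquot_scaleA lquot_scale1 lquot_scaleDr lquot_scaleDl.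

Lemma lquot_scale_pi1 a : a *: \pi_lquot 1 = \pi a.
Proof. by rewrite [LHS]piE mulr1. Qed.

Lemma lquot_scale_pi1_eq0 a : (a *: \pi_lquot 1 == 0) = (a \in left_multiples).
Proof. by rewrite lquot_scale_pi1 -[0]pi_zeror lquot_eqE subr0. Qed.

Lemma lquot_pi1_annihilated : s *: \pi_lquot 1 = 0.
Proof.
by apply/eqP; rewrite lquot_scale_pi1_eq0; apply/left_multiplesP; exists 1; rewrite mul1r.
Qed.

Lemma lquot_fin_gen : fin_gen lquot.
Proof.
exists [:: \pi 1] => q; exists (fun=> repr q).
by rewrite big_ord1 /= lquot_scale_pi1 reprK.
Qed.

Lemma lquot_linear_eq (N : lmodType R) (f g : lquot -> N) :
  linear f -> linear g -> f (\pi 1) = g (\pi 1) -> f =1 g.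
Proof.
move=> lf lg e1; elim/quotW=> x.
by rewrite -lquot_scale_pi1 (scalable_linear lf) (scalable_linear lg) e1.
Qed.

Section Lift.
Variables (N : lmodType R) (n : N).
Hypothesis sn0 : s *: n = 0.

Definition lquot_lift (q : lquot) : N := repr q *: n.

Lemma lquot_liftE x : lquot_lift (\pi x) = x *: n.
Proof.
apply/eqP; rewrite -subr_eq0 -scalerBl.
have /left_multiplesP[a ->] : repr (\pi_lquot x) - x \in left_multiples.
  by rewrite -lquot_eqE reprK.
by rewrite -scalerA sn0 scaler0.
Qed.

Lemma lquot_lift_linear : linear lquot_lift.
Proof.
move=> a; elim/quotW=> x; elim/quotW=> y.
have -> : a *: \pi_lquot x + \pi y = \pi_lquot (a * x + y) by rewrite !piE.
by rewrite !lquot_liftE scalerDl scalerA.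
Qed.

End Lift.
End LeftQuotient.

Lemma linear_map0 (R : nzRingType) (U V : lmodType R) (f : U -> V) :
  linear f -> f 0 = 0.
Proof. by move=> lf; rewrite -(subrr (0 : U)) (zmod_morphism_linear lf) subrr. Qed.

Section Torsion.
Variables (R : nzRingType) (S : R -> Prop).

Lemma tau_lquot_pi1 r : S r -> tau S (\pi_(lquot r) 1).
Proof. by move=> Sr; exists r; split=> //; apply: lquot_pi1_annihilated. Qed.

Lemma tau_representable_fin_gen : tau_representable S -> tau_fin_gen S.
Proof.
by move=> [M [fgM [eta [eta_nat eta_surj _]]]]; exists M; split=> //; exists eta.
Qed.

Lemma tau_fin_gen_coprincipal : tau_fin_gen S -> coprincipal S.
Proof.
move=> [M [fgM [eta [[eta_tau _ eta_nat] eta_surj]]]].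
have lid : linear (@id M) by [].
have [s [Ss s_eta]] := eta_tau M fgM id lid.
split; first by exists s.
exists s; split=> // r Sr.
have [f [lf f_eta]] := eta_surj _ (lquot_fin_gen r) _ (tau_lquot_pi1 Sr).
have eta_f : eta (lquot r) f = f (eta M id).
  exact: eta_nat M _ fgM (lquot_fin_gen r) id f lid lf.
have : s *: \pi_(lquot r) 1 == 0.
  by rewrite -f_eta eta_f -(scalable_linear lf) s_eta linear_map0.
by rewrite lquot_scale_pi1_eq0 => /left_multiplesP.
Qed.

Lemma coprincipal_representable : coprincipal S -> tau_representable S.
Proof.
move=> [_ [s [Ss s_div]]].
have s_kills_tau (N : lmodType R) (n : N) : tau S n -> s *: n = 0.
  by case=> r [Sr rn0]; have [a ->] := s_div r Sr; rewrite -scalerA rn0 scaler0.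
exists (lquot s); split; first exact: lquot_fin_gen.
exists (fun N f => f (\pi 1)); split; [split=> // | |].
- move=> N _ f lf; exists s; split=> //.
  by rewrite -(scalable_linear lf) lquot_pi1_annihilated linear_map0.
- move=> N _ n n_tau; exists (lquot_lift n); split.
    exact: lquot_lift_linear (s_kills_tau _ _ n_tau).
  by rewrite (lquot_liftE (s_kills_tau _ _ n_tau)) scale1r.
- by move=> N _ f g lf lg; apply: lquot_linear_eq.
Qed.

End Torsion.

Theorem corollary3p12 (R : nzRingType) (S : R -> Prop) :
  noetherian_ring R -> common_mult_closed S ->
  (tau_representable S <-> tau_fin_gen S) /\ (tau_fin_gen S <-> coprincipal S).
Proof.
move=> _ _; split; split.
- exact: tau_representable_fin_gen.
- by move/tau_fin_gen_coprincipal/coprincipal_representable.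
- exact: tau_fin_gen_coprincipal.
- by move/coprincipal_representable/tau_representable_fin_gen.
Qed.
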